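(* Let $X$ be a topological space. The following are equivalent: (a) $X$ is totally Lindelöf; (b) every $\omega$-closed filter base $\mathcal{F}$ on $X$ is contained in some total $\omega$-closed filter base $\mathcal{H}$ on $X$; (c) every $\delta$-stable filter base $\mathcal{F}$ on $X$ is contained in some total $\delta$-stable filter base $\mathcal{H}$ on $X$.
   Context: A filter base on $X$ is a nonempty $\mathcal{F}\subseteq\mathcal{P}(X)$ with $\emptyset\notin\mathcal{F}$ and closed under pairwise intersections. $\mathcal{F}$ is stable under countable intersections if for every countable $S\subseteq\mathcal{F}$ there is $H\in\mathcal{F}$ with $H\subseteq\bigcap S$; $\omega$-closed if $\bigcap S\in\mathcal{F}$ for every nonempty countable $S\subseteq\mathcal{F}$; $\delta$-stable if $\bigcap S\neq\emptyset$ for every countable $S\subseteq\mathcal{F}$. $ad(\mathcal{F})=\bigcap\{\overline{F}:F\in\mathcal{F}\}$. A filter base $\mathcal{F}$ is total if every filter base $\mathcal{H}\supseteq\mathcal{F}$ satisfies $ad(\mathcal{H})\neq\emptyset$. $X$ is totally Lindelöf if every filter base on $X$ stable under countable intersections is contained in a total filter base on $X$ stable under countable intersections. *)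

From mathcomp Require Import all_boot all_order.
From mathcomp Require Import all_classical all_reals all_analysis.
Set Implicit Arguments. Unset Strict Implicit. Unset Printing Implicit Defensive.
Local Open Scope classical_set_scope.

Section Defs.
Context {X : topologicalType}.

Definition filter_base (F : set (set X)) : Prop :=
  F !=set0 /\ ~ F set0 /\ (forall A B, F A -> F B -> F (A `&` B)).

Definition stable_countable (F : set (set X)) : Prop :=
  forall S : set (set X), S `<=` F -> countable S ->
    exists2 H, F H & H `<=` \bigcap_(A in S) A.

Definition omega_closed (F : set (set X)) : Prop :=
  forall S : set (set X), S `<=` F -> S !=set0 -> countable S ->
    F (\bigcap_(A in S) A).

Definition delta_stable (F : set (set X)) : Prop :=
  forall S : set (set X), S `<=` F -> countable S ->
    (\bigcap_(A in S) A) !=set0.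

Definition adherence (F : set (set X)) : set X :=
  \bigcap_(A in F) closure A.

Definition total_fb (F : set (set X)) : Prop :=
  forall H : set (set X), filter_base H -> F `<=` H -> adherence H !=set0.

End Defs.

Definition totally_Lindelof (X : topologicalType) : Prop :=
  forall F : set (set X), filter_base F -> stable_countable F ->
    exists H : set (set X),
      [/\ filter_base H, stable_countable H, total_fb H & F `<=` H].

(* For filter bases, omega-closed implies stable under countable intersections,
   which implies delta-stable, and totality passes to larger filter bases.
   Conversely, closing a delta-stable filter base under nonempty countable
   intersections gives an omega-closed filter base containing it.  So between
   any two of the three notions, a total extension of one kind yields one of
   the other kind: weaken via the implications, and recover the stronger
   notion by passing to the countable-intersection closure, which stays
   total. *)
From mathcomp Require Import all_boot all_order.
From mathcomp Require Import all_classical all_reals all_analysis.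
Local Open Scope classical_set_scope.

Lemma countable_setU T (A B : set T) :
  countable A -> countable B -> countable (A `|` B).
Proof.
move=> cA cB.
have -> : A `|` B = \bigcup_(b in [set: bool]) (if b then A else B).
  apply/seteqP; split => x.
  - by case=> h; [exists true | exists false].
  - by case=> -[] _ h; [left | right].
by apply: bigcup_countable; [exact: countableP | case].
Qed.

Section CountableClosure.
Context {X : topologicalType}.
Implicit Types F G H : set (set X).

Definition countable_closure F : set (set X) :=
  [set A | exists S : set (set X), [/\ S `<=` F, countable S, S !=set0 &
     A = \bigcap_(B in S) B]].

Definition total_extension_property (P : set (set X) -> Prop) : Prop :=
  forall F, filter_base F -> P F ->
    exists H, [/\ filter_base H, P H, total_fb H & F `<=` H].

Lemma omega_closed_stable_countable F :
  filter_base F -> omega_closed F -> stable_countable F.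
Proof.
move=> [[A FA] _] oF S SF cS.
have [->|/set0P S0] := eqVneq S set0.
  by exists A => // x _; rewrite bigcap_set0.
by exists (\bigcap_(B in S) B); [exact: oF|].
Qed.

Lemma stable_countable_delta_stable F :
  filter_base F -> stable_countable F -> delta_stable F.
Proof.
move=> [_ [nF0 _]] sF S SF cS.
have [H FH HS] := sF S SF cS.
have /set0P [x Hx] : H != set0 by apply: contra_notN nF0 => /eqP <-.
by exists x; apply: HS.
Qed.

Lemma total_fbS F G : F `<=` G -> total_fb F -> total_fb G.
Proof. by move=> FG tF H fH GH; apply: tF => //; apply: subset_trans GH. Qed.

Lemma sub_countable_closure F : F `<=` countable_closure F.
Proof.
move=> A FA; exists [set A]; split.
- by move=> B ->.
- exact: countable1.
- by exists A.
- by rewrite bigcap_set1.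
Qed.

Lemma countable_closure_omega_closed F : omega_closed (countable_closure F).
Proof.
move=> T TC [A0 TA0] cT.
have /choice [g gP] : forall A : set X, exists S : set (set X), T A ->
    [/\ S `<=` F, countable S, S !=set0 & A = \bigcap_(B in S) B].
  move=> A; have [/TC [S SP]|nTA] := pselect (T A); first by exists S.
  by exists set0 => /nTA.
exists (\bigcup_(A in T) g A); split.
- by move=> B [A /gP[gF _ _ _]]; apply: gF.
- by apply: bigcup_countable => // A /gP[].
- by have [_ _ [B gB] _] := gP A0 TA0; exists B; exists A0.
- apply/seteqP; split => x.
  + move=> Tx B [A TA gAB]; have [_ _ _ eA] := gP A TA.
    by move: (Tx A TA); rewrite eA; apply.
  + move=> gx A TA; have [_ _ _ ->] := gP A TA.
    by move=> B gAB; apply: gx; exists A.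
Qed.

Lemma countable_closure_filter_base F :
  filter_base F -> delta_stable F -> filter_base (countable_closure F).
Proof.
move=> [[A FA] [nF0 FI]] dF; split; [|split].
- by exists A; apply: sub_countable_closure.
- move=> [S [SF cS _ S0]]; have [x Sx] := dF S SF cS.
  by rewrite -S0 in Sx.
- move=> _ _ [S [SF cS [B SB] ->]] [S' [SF' cS' _ ->]].
  exists (S `|` S'); split.
  + by move=> C [/SF|/SF'].
  + exact: countable_setU.
  + by exists B; left.
  + by rewrite bigcap_setU.
Qed.

Lemma total_extension_property_equiv (P Q : set (set X) -> Prop) :
  (forall F, filter_base F -> P F -> Q F) ->
  (forall F, filter_base F -> Q F ->
     filter_base (countable_closure F) /\ P (countable_closure F)) ->
  total_extension_property P <-> total_extension_property Q.
Proof.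
move=> PQ QP; split.
- move=> extP F fF qF; have [fC pC] := QP F fF qF.
  have [H [fH pH tH CH]] := extP _ fC pC.
  by exists H; split; [| exact: PQ | | exact: subset_trans (@sub_countable_closure F) CH].
- move=> extQ F fF pF; have [H [fH qH tH FH]] := extQ F fF (PQ F fF pF).
  have [fC pC] := QP H fH qH.
  exists (countable_closure H); split => //.
  + exact: total_fbS (@sub_countable_closure H) tH.
  + exact: subset_trans FH (@sub_countable_closure H).
Qed.

End CountableClosure.

Theorem proposition1p2 (X : topologicalType) :
  (totally_Lindelof X <->
   (forall F : set (set X), filter_base F -> omega_closed F ->
      exists H : set (set X),
        [/\ filter_base H, omega_closed H, total_fb H & F `<=` H])) /\
  (totally_Lindelof X <->
   (forall F : set (set X), filter_base F -> delta_stable F ->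
      exists H : set (set X),
        [/\ filter_base H, delta_stable H, total_fb H & F `<=` H])).
Proof.
have closure_ok (F : set (set X)) : filter_base F -> delta_stable F ->
    filter_base (countable_closure F) /\ omega_closed (countable_closure F).
  by move=> fF dF; split; [exact: countable_closure_filter_base
                          | exact: countable_closure_omega_closed].
split.
- apply: iff_sym; apply: (@total_extension_property_equiv X omega_closed).
  + exact: omega_closed_stable_countable.
  + by move=> F fF sF; exact: closure_ok F fF (stable_countable_delta_stable _ fF sF).
- apply: (@total_extension_property_equiv X stable_countable).
  + exact: stable_countable_delta_stable.
  + move=> F fF dF; have [fC oC] := closure_ok F fF dF.
    by split; last exact: omega_closed_stable_countable.
Qed.
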